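(* Let $(\mathcal T_0,\mathfrak c)$ be an $(N{+}1)$-colored initial triangulation in $\mathbb R^n$ and let $T\in\mathbb T$. Then every edge $e\in\mathcal E(T)$ with $e\ne\mathrm{bse}(T)$ satisfies $g^\sharp(e)>g^\sharp(\mathrm{bse}(T))$. More generally, for every $m$-subsimplex $S\subset T$ with $m\ge1$ and every edge $e$ of $S$ with $e\ne\mathrm{bse}(S)$, $g^\sharp(e)>g^\sharp(\mathrm{bse}(S))$.
   Context: $n\ge2$, $N\ge n$. An $(N{+}1)$-colored triangulation is a conforming triangulation $\mathcal T_0$ of a polyhedral domain in $\mathbb R^n$ with $\mathfrak c:\mathcal V(\mathcal T_0)\to\{0,\dots,N\}$ giving distinct colors to the vertices of each simplex. Each vertex $v$ has an integer generation $g(v)$, with level $\ell(v)\in\mathbb Z$ and type $t(v)\in\{1,\dots,N\}$ defined by $g(v)=N(\ell(v)-1)+t(v)$; initial vertices have $g(v)=-\mathfrak c(v)$. For an $m$-simplex $S=[v_0,\dots,v_m]$ ($1\le m\le n$) with $g(v_0)>\dots>g(v_m)$: if $\ell(v_m)\ne\ell(v_{m-1})$ then $\mathrm{bse}(S)=[v_{m-1},v_m]$ and the midpoint $\mathrm{bsv}(S)$ has generation $g(v_{m-1})+N$; otherwise, with $j=\min\{k:\ell(v_k)=\ell(v_m)\}$, $\mathrm{bse}(S)=[v_j,v_m]$ and $g(\mathrm{bsv}(S))=g(v_m)+2N+1-t(v_j)$. Define $g^\sharp(S)=g(\mathrm{bsv}(S))$ (in particular for edges, $m=1$). Bisecting an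 $n$-simplex replaces one endpoint of its bisection edge by the midpoint, producing two children. $\mathrm{Refine}(\mathcal T,T)$: with $e=\mathrm{bse}(T)$ and $\omega(e)$ the simplices containing edge $e$, if some $T'\in\omega(e)$ has $\mathrm{bse}(T')\ne e$ return $\mathrm{Refine}(\mathrm{Refine}(\mathcal T,T'),T)$, else bisect all of $\omega(e)$. $\mathbb T$ is the set of all simplices in triangulations obtained from $\mathcal T_0$ by finitely many refinements. $\mathcal E(T)$ is the edge set of $T$. *)

From HB Require Import structures.
From mathcomp Require Import all_boot all_order all_algebra.
From mathcomp Require Import finmap.
From mathcomp Require Import all_classical all_reals all_analysis.
Import numFieldNormedType.Exports.
Set Implicit Arguments. Unset Strict Implicit. Unset Printing Implicit Defensive.
Import Order.TTheory GRing.Theory Num.Theory.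
Local Open Scope classical_set_scope.
Local Open Scope ring_scope.

Section Bisection.
Variables (R : realType) (n N : nat).

Local Notation pt := 'rV[R]_n.
(* a simplex (or sub-simplex, edge) is given by its finite set of vertices *)
Local Notation simplex := {fset pt}.
Local Notation triang := {fset simplex}.
Local Notation genmap := (pt -> int).

Definition conv (S : simplex) : set pt :=
  [set x | exists l : pt -> R, (forall v, v \in S -> 0 <= l v) /\
     \sum_(v <- S) l v = 1 /\ x = \sum_(v <- S) l v *: v].

Definition aff_indep (S : simplex) : Prop :=
  forall l : pt -> R, \sum_(v <- S) l v = 0 -> \sum_(v <- S) l v *: v = 0 ->
    forall v, v \in S -> l v = 0.

Definition nsimplex (T : simplex) : Prop := #|` T| = n.+1 /\ aff_indep T.

Definition conforming (Tr : triang) : Prop :=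
  (forall T, T \in Tr -> nsimplex T) /\
  (forall T1 T2, T1 \in Tr -> T2 \in Tr ->
     conv T1 `&` conv T2 = conv (fsetI T1 T2)).

Definition mesh_domain (Tr : triang) : set pt :=
  [set x | exists2 T, T \in Tr & conv T x].

Definition triangulation_of_domain (Tr : triang) : Prop :=
  conforming Tr /\ Tr != fset0 /\
  exists Omega : set pt, open Omega /\ connected Omega /\
     closure Omega = mesh_domain Tr.

(* level and type: g = N (lev - 1) + typ with typ in {1..N} *)
Definition lev (k : int) : int := ((k - 1) %/ N%:Z)%Z + 1.
Definition typ (k : int) : int := ((k - 1) %% N%:Z)%Z + 1.

(* vertices sorted by decreasing generation: v_0, ..., v_m *)
Definition gsort (g : genmap) (S : simplex) : seq pt :=
  sort (fun x y => (g y <= g x)%R) (enum_fset S).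

Definition bse_data (g : genmap) (S : simplex) : simplex * int :=
  let s := gsort g S in
  let m := (size s).-1 in
  let vm := nth 0 s m in
  let vm1 := nth 0 s m.-1 in
  if lev (g vm) != lev (g vm1) then ([fset vm1; vm]%fset, g vm1 + N%:Z)
  else
    let vj := nth 0 s (find (fun v => lev (g v) == lev (g vm)) s) in
    ([fset vj; vm]%fset, g vm + (2 * N)%:Z + 1 - typ (g vj)).

Definition bse (g : genmap) (S : simplex) : simplex := (bse_data g S).1.
Definition gsharp (g : genmap) (S : simplex) : int := (bse_data g S).2.

Definition bsv (g : genmap) (S : simplex) : pt :=
  2^-1 *: \sum_(v <- bse g S) v.

Definition omega (Tr : triang) (e : simplex) : triang :=
  [fset T in Tr | fsubset e T]%fset.

Definition children (g : genmap) (T : simplex) : triang :=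
  let z := bsv g T in
  [fset fsetU [fset z]%fset (fsetD T [fset a]%fset) | a in bse g T]%fset.

Definition bisect_all (Tr : triang) (g : genmap) (T : simplex) : triang :=
  let W := omega Tr (bse g T) in
  (fsetD Tr W `|` \bigcup_(T' <- enum_fset W) children g T')%fset.

Definition new_gen (g : genmap) (T : simplex) : genmap :=
  let z := bsv g T in fun x => if x == z then gsharp g T else g x.

(* Refine(Tr, T), as a (possibly nondeterministic) big-step relation:
   refine Tr g T Tr' g'  means that the call Refine(Tr,T) (current
   generations g) returns the triangulation Tr' (new generations g'). *)
Inductive refine : triang -> genmap -> simplex -> triang -> genmap -> Prop :=
| refine_bisect Tr g T :
    (forall T', T' \in omega Tr (bse g T) -> bse g T' = bse g T) ->
    refine Tr g T (bisect_all Tr g T) (new_gen g T)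
| refine_rec Tr g T T' Tr1 g1 Tr2 g2 :
    T' \in omega Tr (bse g T) -> bse g T' != bse g T ->
    refine Tr g T' Tr1 g1 -> refine Tr1 g1 T Tr2 g2 ->
    refine Tr g T Tr2 g2.

Inductive reachable (Tr0 : triang) (g0 : genmap) : triang -> genmap -> Prop :=
| reach0 : reachable Tr0 g0 Tr0 g0
| reach_step Tr g T Tr' g' :
    reachable Tr0 g0 Tr g -> T \in Tr -> refine Tr g T Tr' g' ->
    reachable Tr0 g0 Tr' g'.

Definition coloring (Tr : triang) (c : pt -> 'I_N.+1) : Prop :=
  forall T, T \in Tr -> {in T &, injective c}.

Definition init_gen (c : pt -> 'I_N.+1) : genmap := fun v => - (c v : nat)%:Z.

End Bisection.

(* The refinement preserves three invariants: the mesh stays conforming, the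
   vertices of each simplex T have pairwise distinct generations, and all of
   them are below g#(T).  Distinctness is all the comparison needs: writing
   v_m, v_(m-1), v_j for the vertices that define bse(S), the inequality
   g#(e) > g#(bse S) for another edge e of S is arithmetic on levels and types.
   The invariants survive a bisection because the midpoint of the bisection
   edge is not yet a vertex of the conforming mesh, and it receives g#(T),
   which exceeds the generation of every other vertex of the children.  The
   recursion of Refine only bisects neighbours T' with g#(T') < g#(T), and
   these remove only simplices of g# at most g#(T'), so T is still present
   when its own bisection comes. *)

From Pilot Require Import Defs.
From HB Require Import structures.
From mathcomp Require Import all_boot all_order all_algebra.
From mathcomp Require Import finmap.
From mathcomp Require Import all_classical all_reals all_analysis.
From mathcomp Require Import zify lra.
Import numFieldNormedType.Exports.
Import Order.TTheory GRing.Theory Num.Theory.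
Set Implicit Arguments. Unset Strict Implicit. Unset Printing Implicit Defensive.
Local Open Scope ring_scope.

Section LevelType.
Variable N : nat.
Hypothesis N_gt0 : (0 < N)%N.

Lemma lev_typE (k : int) : k = N%:Z * (lev N k - 1) + typ N k.
Proof.
rewrite /lev /typ; have := divz_eq (k - 1) N%:Z.
set q := ((k - 1) %/ N%:Z)%Z; set r := ((k - 1) %% N%:Z)%Z; nia.
Qed.

Lemma typ_bounds (k : int) : 1 <= typ N k <= N%:Z.
Proof.
rewrite /typ; have := @modz_ge0 (k - 1) N%:Z; have := @ltz_pmod (k - 1) N%:Z.
lia.
Qed.

Lemma lev_lt_sub_typ (a b : int) :
  lev N a < lev N b -> a - typ N a + N%:Z <= b - typ N b.
Proof.
move=> lt_ab; have := lev_typE a; have := lev_typE b.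
have : N%:Z * lev N a <= N%:Z * (lev N b - 1) by apply: ler_wpM2l; lia.
lia.
Qed.

Lemma lev_eq_sub_typ (a b : int) : lev N a = lev N b -> a - typ N a = b - typ N b.
Proof. by move=> eq_ab; have := lev_typE a; have := lev_typE b; rewrite eq_ab; lia. Qed.

Lemma le_lev (a b : int) : a <= b -> lev N a <= lev N b.
Proof.
move=> le_ab; rewrite leNgt; apply/negP => /lev_lt_sub_typ.
have := typ_bounds a; have := typ_bounds b; lia.
Qed.

(* g# of an edge whose endpoints have generations [a > b]. *)
Definition edge_gsharp (a b : int) : int :=
  if lev N a != lev N b then a + N%:Z else b + (2 * N)%:Z + 1 - typ N a.

Lemma edge_gsharp_gt a b : b < a -> a < edge_gsharp a b.
Proof.
move=> lt_ba; have := typ_bounds a; have := typ_bounds b.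
by rewrite /edge_gsharp; case: ifP => [_ | /negbFE/eqP/esym/lev_eq_sub_typ]; lia.
Qed.

Lemma edge_gsharp_gt0 a b : - N%:Z <= b -> b < a -> 0 < edge_gsharp a b.
Proof. by move=> ? ?; have := typ_bounds a; rewrite /edge_gsharp; case: ifP; lia. Qed.

Lemma edge_gsharp_lt_of_lev_neq w u a b : w < u -> lev N w != lev N u ->
  b < a -> u < a -> b = w \/ u <= b -> edge_gsharp u w < edge_gsharp a b.
Proof.
move=> lt_wu ne_wu lt_ba lt_ua b_wu.
have := typ_bounds a; move: (le_lev (ltW lt_wu)) (le_lev (ltW lt_ua)) ne_wu.
rewrite /edge_gsharp eq_sym => ? ? ne_uw; rewrite ne_uw.
by case: ifP => [_ | /negbFE/eqP]; case: b_wu => [eq_bw|]; rewrite ?eq_bw; lia.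
Qed.

Lemma edge_gsharp_lt_of_lev_eq w v a b : lev N v = lev N w -> w < v ->
  w <= b -> b < a -> (lev N a = lev N w -> a <= v) -> a != v \/ b != w ->
  edge_gsharp v w < edge_gsharp a b.
Proof.
move=> lev_vw lt_wv le_wb lt_ba max_v ne_ab.
have := typ_bounds a; have := typ_bounds b; have := typ_bounds v; have := typ_bounds w.
have := lev_eq_sub_typ lev_vw; have lev_wb := le_lev le_wb; have lev_ba := le_lev (ltW lt_ba).
rewrite /edge_gsharp lev_vw eqxx /=; case: ifP => [ne_ab_lev | /negbFE/eqP eq_ab_lev].
  have lt_wa : lev N w < lev N a by apply: contraNlt ne_ab_lev; lia.
  have := lev_lt_sub_typ lt_wa; lia.
have [lt_wb | eq_wb] : lev N w < lev N b \/ lev N w = lev N b by lia.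
  have := lev_lt_sub_typ lt_wb; lia.
have := max_v (etrans eq_ab_lev (esym eq_wb)); have := lev_eq_sub_typ eq_wb.
have := lev_eq_sub_typ eq_ab_lev.
case: ne_ab => /eqP; lia.
Qed.

End LevelType.

Section SortedVertices.
Variables (R : realType) (n : nat) (g : 'rV[R]_n -> int) (S : {fset 'rV[R]_n}).
Hypothesis g_inj : {in S &, injective g}.
Local Notation s := (gsort g S).

Lemma mem_gsort x : (x \in s) = (x \in S).
Proof. exact: mem_sort. Qed.

Lemma size_gsort : size s = #|`S|.
Proof. exact: size_sort. Qed.

Lemma gsort_uniq : uniq s.
Proof. by rewrite sort_uniq fset_uniq. Qed.

Lemma gsort_nth_le i j : (i <= j < size s)%N -> g (nth 0 s j) <= g (nth 0 s i).
Proof.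
case/andP=> le_ij lt_js; apply: (sorted_leq_nth (leT := fun x y => g y <= g x)).
- by move=> x y z /= le_yx le_zy; apply: le_trans le_zy le_yx.
- by move=> x /=.
- by apply: sort_sorted => x y; apply: le_total.
- by rewrite inE (leq_ltn_trans le_ij).
- by rewrite inE.
- exact: le_ij.
Qed.

Lemma gsort_nth_lt i j : (i < j < size s)%N -> g (nth 0 s j) < g (nth 0 s i).
Proof.
case/andP=> lt_ij lt_js; have lt_is := ltn_trans lt_ij lt_js.
rewrite lt_neqAle gsort_nth_le ?(ltnW lt_ij) ?lt_js // andbT.
apply: contraTneq lt_ij => /g_inj; rewrite -!mem_gsort !mem_nth // => /(_ isT isT) /eqP.
by rewrite nth_uniq ?gsort_uniq // => /eqP->; rewrite ltnn.
Qed.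

Lemma nth_index_gsort x : x \in S -> (index x s < size s)%N /\ nth 0 s (index x s) = x.
Proof. by rewrite -mem_gsort => xs; rewrite index_mem nth_index. Qed.

End SortedVertices.

Section BisectionEdge.
Variables (R : realType) (n N : nat).
Local Notation pt := 'rV[R]_n.
Implicit Types (g : pt -> int) (S e : {fset pt}).

(* [w], [u] and [v] are the vertices v_m, v_(m-1) and v_j of the definition. *)
Lemma bse_dataP g S : {in S &, injective g} -> (2 <= #|`S|)%N ->
  exists w u v, [/\ w \in S, u \in S, v \in S, u != w &
   [/\ {in S, forall x, x != w -> g w < g x},
       {in S, forall x, x != w -> x != u -> g u < g x},
       lev N (g v) = lev N (g w),
       {in S, forall x, lev N (g x) = lev N (g w) -> g x <= g v} &
       bse_data N g S =
         if lev N (g w) != lev N (g u) then ([fset u; w]%fset, edge_gsharp N (g u) (g w))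
         else ([fset v; w]%fset, edge_gsharp N (g v) (g w))]].
Proof.
move=> g_inj S_ge2; set s := gsort g S.
have size_s : size s = #|`S| by apply: size_gsort.
set m := (size s).-1.
have lt_ms : (m < size s)%N by rewrite /m size_s; lia.
have m_gt0 : (0 < m)%N by rewrite /m size_s; lia.
have size_m : size s = m.+1 by rewrite /m prednK // size_s; lia.
set P := fun x => lev N (g x) == lev N (g (nth 0 s m)).
have hasP : has P s by apply/hasP; exists (nth 0 s m); rewrite ?mem_nth /P.
have lt_find : (find P s < size s)%N by rewrite -has_find.
have in_S i : (i < size s)%N -> nth 0 s i \in S by move=> lt_is; rewrite -(mem_gsort g) mem_nth.
have uniq_s : uniq s := gsort_uniq g S.
have index_s x : x \in S -> (index x s < size s)%N /\ nth 0 s (index x s) = x.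
  exact: nth_index_gsort.
exists (nth 0 s m), (nth 0 s m.-1), (nth 0 s (find P s)); split.
- exact: in_S.
- by apply: in_S; lia.
- exact: in_S.
- rewrite nth_uniq //; last exact: leq_ltn_trans (leq_pred m) lt_ms.
  by apply/eqP; move: m_gt0; clear; lia.
split.
- move=> x xS; have [lt_xs <-] := index_s x xS.
  rewrite nth_uniq // => ne_xm; apply: gsort_nth_lt => //; rewrite -/s; lia.
- move=> x xS; have [lt_xs <-] := index_s x xS.
  rewrite !nth_uniq //; last exact: leq_ltn_trans (leq_pred m) lt_ms.
  move=> ne_xm ne_xm1.
  by apply: gsort_nth_lt => //; rewrite -/s; lia.
- exact/eqP/(nth_find 0 hasP).
- move=> x xS /eqP Px; have [lt_xs <-] := index_s x xS.
  apply: gsort_nth_le => //; rewrite -/s lt_xs andbT leqNgt.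
  by apply/negP => /(before_find 0); rewrite nth_index ?(mem_gsort g) // /P Px.
- rewrite /bse_data -/s /edge_gsharp eq_sym; case: ifP => // _.
  by rewrite (eqP (nth_find 0 hasP)) eqxx.
Qed.

Lemma edge_sorted_by_gen g e : #|`e| = 2%N -> {in e &, injective g} ->
  exists x y, [/\ e = [fset x; y]%fset, x != y & g y < g x].
Proof.
move=> e2 g_inj; have := fset_uniq e; have : size (enum_fset e) = 2%N by [].
case E: (enum_fset e) => [|a [|b []]] //= _; rewrite inE andbT => ne_ab.
have eE : e = [fset a; b]%fset by apply/fsetP => z; rewrite -[z \in e]/(z \in enum_fset e) E !inE.
have aE : a \in e by rewrite eE !inE eqxx.
have bE : b \in e by rewrite eE !inE eqxx orbT.
have ne_g : g a != g b by apply: contra ne_ab => /eqP/g_inj ->.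
case: (ltgtP (g a) (g b)) => [lt_ab | lt_ba | eq_ab]; last by rewrite eq_ab eqxx in ne_g.
- by exists b, a; rewrite eE fsetUC eq_sym.
- by exists a, b.
Qed.

Lemma bse_data_edge g x y : x != y -> g y < g x ->
  bse_data N g [fset x; y]%fset = ([fset x; y]%fset, edge_gsharp N (g x) (g y)).
Proof.
move=> ne_xy lt_yx.
have g_inj : {in [fset x; y]%fset &, injective g}.
  by move=> a b; rewrite !inE => /orP[]/eqP-> /orP[]/eqP-> // eq_g;
    move: lt_yx; rewrite eq_g ltxx.
have S_ge2 : (2 <= #|`[fset x; y]%fset|)%N by rewrite cardfs2 ne_xy.
have [w [u [v [wS uS vS ne_uw [min_w _ lev_v max_v ->]]]]] := bse_dataP g_inj S_ge2.
have xS : x \in [fset x; y]%fset by rewrite !inE eqxx.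
have yS : y \in [fset x; y]%fset by rewrite !inE eqxx orbT.
have eq_wy : w = y.
  move: wS; rewrite !inE => /orP[]/eqP // eq_wx.
  have := min_w y yS; rewrite eq_wx eq_sym ne_xy => /(_ isT).
  by rewrite ltNge (ltW lt_yx).
subst w.
have -> : u = x by move: uS ne_uw; rewrite !inE => /orP[]/eqP-> //; rewrite eqxx.
case: ifP => // /negbFE/eqP eq_lev.
have -> // : v = x.
move: vS; rewrite !inE => /orP[]/eqP // eq_vy.
have := max_v x xS; rewrite eq_vy -eq_lev => /(_ erefl).
by rewrite leNgt lt_yx.
Qed.

Lemma bseP g S : {in S &, injective g} -> (2 <= #|`S|)%N ->
  [/\ fsubset (bse N g S) S, #|`bse N g S| = 2%N & gsharp N g (bse N g S) = gsharp N g S].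
Proof.
move=> g_inj S_ge2.
have [w [u [v [wS uS vS ne_uw [min_w _ lev_v max_v E]]]]] := bse_dataP g_inj S_ge2.
have lt_wu := min_w u uS ne_uw.
have sub_edge x : x \in S -> fsubset [fset x; w]%fset S.
  by move=> xS; apply/fsubsetP => z; rewrite !inE => /orP[]/eqP->.
rewrite /bse /gsharp E; case: ifP => [_ | /negbFE/eqP eq_lev] /=.
  by rewrite bse_data_edge // cardfs2 ne_uw; split=> //; apply: sub_edge.
have lt_wv : g w < g v by apply: lt_le_trans lt_wu (max_v u uS (esym eq_lev)).
have ne_vw : v != w by apply: contraTneq lt_wv => ->; rewrite ltxx.
by rewrite bse_data_edge // cardfs2 ne_vw; split=> //; apply: sub_edge.
Qed.

Hypothesis N_gt0 : (0 < N)%N.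

Lemma gsharp_lt_edge g S e : {in S &, injective g} -> (2 <= #|`S|)%N ->
  fsubset e S -> #|`e| = 2%N -> e != bse N g S -> gsharp N g S < gsharp N g e.
Proof.
move=> g_inj S_ge2 eS e2.
have [x [y [eE ne_xy lt_yx]]] := edge_sorted_by_gen e2 (sub_in2 (fsubsetP eS) g_inj); subst e.
have xS : x \in S by apply: (fsubsetP eS); rewrite !inE eqxx.
have yS : y \in S by apply: (fsubsetP eS); rewrite !inE eqxx orbT.
have [w [u [v [wS uS vS ne_uw [min_w min_u lev_v max_v E]]]]] := bse_dataP g_inj S_ge2.
have le_wy : g w <= g y by case: (eqVneq y w) => [-> // | /(min_w y yS)/ltW].
have ne_xw : x != w by apply: contraTneq (le_lt_trans le_wy lt_yx) => ->; rewrite ltxx.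
have lt_wu := min_w u uS ne_uw.
rewrite /gsharp /bse E bse_data_edge //.
case: ifP => [ne_lev | /negbFE/eqP eq_lev] /= ne_e.
- have ne_xu : x != u.
    apply: contra_neq ne_e => eq_xu; case: (eqVneq y w) => [-> | ne_yw]; first by rewrite eq_xu.
    have := min_u y yS ne_yw; rewrite -eq_xu eq_sym ne_xy => /(_ isT).
    by rewrite ltNge (ltW lt_yx).
  apply: edge_gsharp_lt_of_lev_neq => //; first exact: min_u.
  case: (eqVneq y w) => [-> | ne_yw]; [by left | right].
  by case: (eqVneq y u) => [-> // | ne_yu]; apply/ltW; apply: min_u.
- apply: edge_gsharp_lt_of_lev_eq => //.
  + exact: lt_le_trans lt_wu (max_v u uS (esym eq_lev)).
  + exact: max_v.
  + case: (eqVneq x v) => [eq_xv | ne_xv].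
      by right; apply: contra_neq ne_e => /(g_inj _ _ yS wS) ->; rewrite eq_xv.
    by left; apply: contra_neq ne_xv; apply: g_inj.
Qed.

Lemma gen_lt_gsharp_edge g e : #|`e| = 2%N -> {in e &, injective g} ->
  {in e, forall v, g v < gsharp N g e}.
Proof.
move=> e2 g_inj; have [x [y [-> ne_xy lt_yx]]] := edge_sorted_by_gen e2 g_inj.
have lt_x := edge_gsharp_gt N_gt0 lt_yx.
by rewrite /gsharp bse_data_edge // => v; rewrite !inE => /orP[]/eqP-> //; apply: lt_trans lt_x.
Qed.

Lemma gsharp_eq_in g1 g2 S : {in S, g1 =1 g2} -> {in S &, injective g1} ->
  (2 <= #|`S|)%N -> gsharp N g1 S = gsharp N g2 S.
Proof.
move=> eq_g g1_inj S_ge2; rewrite /gsharp.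
have g2_inj : {in S &, injective g2} by move=> x y xS yS; rewrite -!eq_g //; apply: g1_inj.
have [w [u [v [wS uS vS ne_uw [min_w min_u lev_v max_v ->]]]]] := bse_dataP g1_inj S_ge2.
have [w' [u' [v' [wS' uS' vS' ne_uw' [min_w' min_u' lev_v' max_v' ->]]]]] :=
  bse_dataP g2_inj S_ge2.
have eq_w : w' = w.
  apply/eqP; apply: contraT => ne_w.
  have := min_w' w wS; rewrite eq_sym ne_w -!eq_g // => /(_ isT) lt_w.
  by have := lt_trans lt_w (min_w w' wS' ne_w); rewrite ltxx.
subst w'.
have eq_u : u' = u.
  apply/eqP; apply: contraT => ne_u.
  have := min_u' u uS ne_uw; rewrite eq_sym ne_u -!eq_g // => /(_ isT) lt_u.
  by have := lt_trans lt_u (min_u u' uS' ne_uw' ne_u); rewrite ltxx.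
subst u'.
have eq_v : v' = v.
  apply: g1_inj => //; apply/eqP; rewrite eq_le max_v //=; last by rewrite !eq_g.
  by rewrite !eq_g // max_v' // -!eq_g.
by rewrite eq_v !eq_g.
Qed.

End BisectionEdge.

Section ProperGenerations.
Variables (R : realType) (n N : nat).
Hypothesis N_gt0 : (0 < N)%N.
Local Notation pt := 'rV[R]_n.

Definition proper_gen (g : pt -> int) (T : {fset pt}) : Prop :=
  {in T &, injective g} /\ {in T, forall v, g v < gsharp N g T}.

Lemma proper_gen_eq_in g1 g2 T : {in T, g1 =1 g2} -> (2 <= #|`T|)%N ->
  proper_gen g1 T -> proper_gen g2 T.
Proof.
move=> eq_g T_ge2 [g1_inj lt_g1]; rewrite /proper_gen -(gsharp_eq_in N eq_g g1_inj T_ge2).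
by split=> [x y xT yT | v vT]; rewrite -!eq_g //; [apply: g1_inj | apply: lt_g1].
Qed.

(* The new vertex [z] is the youngest vertex of the child, and every edge of the
   child either contains [z] or is an edge of [A] other than its bisection edge. *)
Lemma proper_gen_child g g' A a z : proper_gen g A -> (2 <= #|`A|)%N ->
  a \in bse N g A -> z \notin A -> {in A, g' =1 g} -> g' z = gsharp N g A ->
  proper_gen g' (z |` (A `\ a))%fset.
Proof.
move=> [g_inj lt_gA] A_ge2 aB zA eq_g' g'z.
have [sB _ _] := bseP N g_inj A_ge2; have aA := fsubsetP sB a aB.
set C := (z |` (A `\ a))%fset.
have CA v : v \in C -> v != z -> v \in (A `\ a)%fset.
  by rewrite in_fset1U => /orP[/eqP-> | //]; rewrite eqxx.
have lt_z v : v \in C -> v != z -> g' v < g' z.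
  by move=> vC ne_vz; have /fsetD1P[_ vA] := CA v vC ne_vz; rewrite g'z eq_g' //; apply: lt_gA.
have g'_inj : {in C &, injective g'}.
  move=> x y xC yC; case: (eqVneq x z) => [-> | ne_xz]; case: (eqVneq y z) => [-> | ne_yz] //.
  - by move=> eq_zy; have := lt_z y yC ne_yz; rewrite eq_zy ltxx.
  - by move=> eq_xz; have := lt_z x xC ne_xz; rewrite eq_xz ltxx.
  have /fsetD1P[_ xA] := CA x xC ne_xz; have /fsetD1P[_ yA] := CA y yC ne_yz.
  by rewrite !eq_g' //; apply: g_inj.
have C_ge2 : (2 <= #|`C|)%N.
  by move: A_ge2; rewrite /C cardfsU1 in_fsetD1 (negbTE zA) andbF (cardfsD1 a A) aA.
have lt_edge e : fsubset e C -> #|`e| = 2%N -> g' z < gsharp N g' e.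
  move=> eC e2; have g'_inj_e := sub_in2 (fsubsetP eC) g'_inj.
  have [ze | zNe] := boolP (z \in e); first exact: gen_lt_gsharp_edge.
  have eA : fsubset e (A `\ a)%fset.
    by apply/fsubsetP => v ve; apply: CA; [apply: (fsubsetP eC) | apply: contraNneq zNe => <-].
  have eq_g'_e : {in e, g' =1 g} by move=> v /(fsubsetP eA) /fsetD1P[_ /eq_g'].
  rewrite (gsharp_eq_in N eq_g'_e) ?e2 // g'z; apply: gsharp_lt_edge => //.
  - exact: fsubset_trans eA (fsubsetDl _ _).
  - by apply: contraTneq aB => <-; apply/negP => /(fsubsetP eA); rewrite in_fsetD1 eqxx.
rewrite /proper_gen; have [sBC BC2 <-] := bseP N g'_inj C_ge2.
split=> // v vC; have := lt_edge _ sBC BC2.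
by case: (eqVneq v z) => [-> // | ne_vz]; apply: lt_trans (lt_z v vC ne_vz).
Qed.

End ProperGenerations.

Section Barycentric.
Variables (R : realType) (n : nat).
Local Notation pt := 'rV[R]_n.
Implicit Types (A D E : {fset pt}) (l mu : pt -> R) (x : pt).

Definition barycentric A l x : Prop :=
  [/\ {in A, forall v, 0 <= l v}, \sum_(v <- A) l v = 1 & x = \sum_(v <- A) l v *: v].

Lemma convP A x : Defs.conv A x <-> exists l, barycentric A l x.
Proof. by split=> -[l]; [case=> ? [? ?] | case]; exists l. Qed.

Lemma sum_restrict (V : zmodType) D E (F : pt -> V) :
  {in D, forall v, v \notin E -> F v = 0} ->
  \sum_(v <- E) (if v \in D then F v else 0) = \sum_(v <- D) F v.
Proof.
move=> F0; rewrite (big_fset_incl _ (fsubsetUr D E)) => [|v _ vNE]; last first.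
  by case: ifP => // vD; apply: F0.
rewrite -(big_fset_incl _ (fsubsetUl D E)) => [|v _ vND]; last by rewrite (negbTE vND).
by apply: eq_fbigr => v vD _; rewrite vD.
Qed.

Lemma sum_restrict_scale D E l : {in D, forall v, v \notin E -> l v = 0} ->
  \sum_(v <- E) (if v \in D then l v else 0) *: v = \sum_(v <- D) l v *: v.
Proof.
move=> l0; rewrite -(@sum_restrict _ D E (fun v => l v *: v)) => [|v vD /(l0 v vD) ->]; last first.
  by rewrite scale0r.
by apply: eq_fbigr => v _ _; case: ifP; rewrite ?scale0r.
Qed.

Lemma barycentric_restrict D E l x : barycentric D l x ->
  {in D, forall v, v \notin E -> l v = 0} ->
  barycentric E (fun v => if v \in D then l v else 0) x.
Proof.
move=> [l_ge0 l_sum1 ->] l0; split; first by move=> v _ /=; case: ifP => // /l_ge0.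
- by rewrite sum_restrict.
- by rewrite sum_restrict_scale.
Qed.

Lemma conv_support D E l x : barycentric D l x ->
  {in D, forall v, v \notin E -> l v = 0} -> Defs.conv E x.
Proof. by move=> bl l0; apply/convP; eexists; apply: barycentric_restrict bl l0. Qed.

Lemma conv_sub A E x : fsubset A E -> Defs.conv A x -> Defs.conv E x.
Proof.
move=> sAE /convP[l bl]; apply: conv_support bl _ => v vA.
by rewrite (fsubsetP sAE v vA).
Qed.

Lemma aff_indep_sub D E : fsubset D E -> aff_indep E -> aff_indep D.
Proof.
move=> sDE indepE l l0 lv0 v vD.
have sub0 : {in D, forall u, u \notin E -> l u = 0} by move=> u uD; rewrite (fsubsetP sDE u uD).
have := indepE (fun u => if u \in D then l u else 0).
rewrite sum_restrict_scale // sum_restrict // => /(_ l0 lv0 v (fsubsetP sDE v vD)).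
by rewrite vD.
Qed.

Lemma barycentric_unique A l mu x : aff_indep A ->
  barycentric A l x -> barycentric A mu x -> {in A, l =1 mu}.
Proof.
move=> indep [_ l1 lx] [_ mu1 mux] v vA; apply/eqP; rewrite -subr_eq0; apply/eqP.
apply: (indep (fun v => l v - mu v)) => //; first by rewrite sumrB l1 mu1 subrr.
by under eq_bigr do rewrite scalerBl; rewrite sumrB -lx -mux subrr.
Qed.

Lemma conv_vertex A v : v \in A -> Defs.conv A v.
Proof.
move=> vA; apply: (@conv_sub [fset v]%fset); first by rewrite fsub1set.
apply/convP; exists (fun=> 1); split=> //; by rewrite big_seq_fset1 ?scale1r.
Qed.

Lemma midpoint_neq (r w : pt) : r != w -> 2^-1 *: (r + w) != r.
Proof.
move=> ne_rw; apply: contra_neq ne_rw => mid_r.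
have : 2 *: (2^-1 *: (r + w)) = 2 *: r by rewrite mid_r.
by rewrite scalerA mulfV ?pnatr_eq0 // scale1r scaler_nat mulr2n => /addrI ->.
Qed.

Lemma barycentric_midpoint (r w : pt) : r != w ->
  barycentric [fset r; w]%fset (fun=> 2^-1) (2^-1 *: (r + w)).
Proof.
move=> ne_rw; have rNw : r \notin [fset w]%fset by rewrite inE.
split=> [v _ | | ]; rewrite ?big_fsetU1 ?big_seq_fset1 //=; first lra.
by rewrite scalerDr.
Qed.

Lemma midpoint_not_indep B (r w : pt) : r \in B -> w \in B -> r != w ->
  2^-1 *: (r + w) \in B -> ~ aff_indep B.
Proof.
move=> rB wB ne_rw zB; set z := 2^-1 *: (r + w) in zB *.
have ne_zr : z != r := midpoint_neq ne_rw.
have ne_zw : z != w by rewrite /z addrC midpoint_neq // eq_sym.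
have sub : fsubset (z |` [fset r; w])%fset B.
  by apply/fsubsetP => v; rewrite !inE => /orP[|/orP[]] /eqP->.
move=> /(aff_indep_sub sub) /(_ (fun v => if v == z then 1 else - 2^-1)).
have zNrw : z \notin [fset r; w]%fset by rewrite !inE negb_or ne_zr ne_zw.
have rNw : r \notin [fset w]%fset by rewrite inE.
rewrite !big_fsetU1 //= !big_seq_fset1 eqxx ![_ == z]eq_sym (negbTE ne_zr) (negbTE ne_zw).
move=> indep; have s0 : 1 + (- 2^-1 + - 2^-1) = 0 :> R by lra.
have v0 : 1 *: z + (- 2^-1 *: r + - 2^-1 *: w) = 0.
  by rewrite /z scale1r !scaleNr -opprD -scalerDr subrr.
by have /eqP := indep s0 v0 z (fset1U1 _ _); rewrite eqxx oner_eq0.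
Qed.

Section Child.
Variables (A : {fset pt}) (r w z : pt).
Hypotheses (rA : r \in A) (wA : w \in A) (ne_rw : r != w) (zNA : z \notin A).
Hypothesis z_mid : z = 2^-1 *: (r + w).
Local Notation C := (z |` (A `\ r))%fset.

(* the weight of the midpoint [z] is shared equally by [r] and [w] *)
Definition parent_coord l v : R :=
  if v == r then l z / 2 else if v == w then l w + l z / 2 else l v.

Lemma sum_parent_coord l :
  \sum_(v <- C) l v = \sum_(v <- A) parent_coord l v /\
  \sum_(v <- C) l v *: v = \sum_(v <- A) parent_coord l v *: v.
Proof.
have zNAr : z \notin (A `\ r)%fset by rewrite in_fsetD1 negb_and zNA orbT.
have wAr : w \in (A `\ r)%fset by rewrite in_fsetD1 eq_sym ne_rw.
have rest v : v \in (A `\ r `\ w)%fset -> parent_coord l v = l v.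
  by rewrite !in_fsetD1 /parent_coord => /andP[/negbTE-> /andP[/negbTE-> _]].
rewrite !big_fsetU1 // !(big_fsetD1 r rA) !(big_fsetD1 w wAr) /=.
have -> : \sum_(v <- (A `\ r `\ w)%fset) parent_coord l v = \sum_(v <- (A `\ r `\ w)%fset) l v.
  by apply: eq_fbigr => v vA _; rewrite rest.
have -> : \sum_(v <- (A `\ r `\ w)%fset) parent_coord l v *: v =
          \sum_(v <- (A `\ r `\ w)%fset) l v *: v.
  by apply: eq_fbigr => v vA _; rewrite rest.
rewrite /parent_coord eqxx (eq_sym w r) (negbTE ne_rw) eqxx; split.
  set s := \sum_(_ <- _) _; lra.
rewrite z_mid scalerA scalerDr !scalerDl -!addrA; congr (_ + _).
by rewrite mulrC addrCA.
Qed.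

Lemma barycentric_parent l x : barycentric C l x ->
  barycentric A (parent_coord l) x /\ parent_coord l r <= parent_coord l w.
Proof.
move=> [l_ge0 l1 lx]; have [s1 s2] := sum_parent_coord l.
have lz : 0 <= l z by apply: l_ge0; rewrite !inE eqxx.
have lw : 0 <= l w by apply: l_ge0; rewrite !inE (eq_sym w r) ne_rw wA orbT.
rewrite /parent_coord eqxx (eq_sym w r) (negbTE ne_rw) eqxx; split; last lra.
split; [|by rewrite -s1|by rewrite -s2].
move=> v vA; rewrite /parent_coord; case: ifP => [_ | /negbT ne_vr]; first lra.
case: ifP => _; first lra.
by apply: l_ge0; rewrite !inE ne_vr vA orbT.
Qed.

Lemma conv_parent x : Defs.conv C x -> Defs.conv A x.
Proof. by case/convP=> l /barycentric_parent[bA _]; apply/convP; exists (parent_coord l). Qed.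

Lemma conv_child_coord_le mu x : aff_indep A -> Defs.conv C x -> barycentric A mu x ->
  mu r <= mu w.
Proof.
move=> indepA /convP[l /barycentric_parent[bA le_rw]] bmu.
by have eq_mu := barycentric_unique indepA bA bmu; rewrite -!eq_mu.
Qed.

Lemma barycentric_child mu x : barycentric A mu x -> mu r <= mu w ->
  exists l, barycentric C l x /\ l w = mu w - mu r.
Proof.
move=> [mu_ge0 mu1 mux] le_rw; have mu_r := mu_ge0 r rA.
pose l v := if v == z then 2 * mu r else if v == w then mu w - mu r else mu v.
have ne_wz : w != z by apply: contraNneq zNA => <-.
have parent : {in A, parent_coord l =1 mu}.
  move=> v vA; rewrite /parent_coord /l eqxx (negbTE ne_wz) eqxx.
  case: ifP => [/eqP-> | _]; first lra.
  case: (eqVneq v w) => [-> | ne_vw]; first lra.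
  have ne_vz : v != z by apply: contraNneq zNA => <-.
  by rewrite (negbTE ne_vz).
have [s1 s2] := sum_parent_coord l.
exists l; split; last by rewrite /l (negbTE ne_wz) eqxx.
split.
- move=> v; rewrite !inE /l => /orP[/eqP-> | /andP[_ vA]]; first by rewrite eqxx; lra.
  case: ifP => _; first lra.
  by case: ifP => _; [lra | apply: mu_ge0].
- by rewrite s1 -mu1; apply: eq_fbigr => v vA _; rewrite parent.
- by rewrite s2 mux; apply: eq_fbigr => v vA _; rewrite parent.
Qed.

Lemma nsimplex_child : nsimplex A -> nsimplex C.
Proof.
move=> [cardA indepA]; split.
  by rewrite cardfsU1 in_fsetD1 (negbTE zNA) andbF -cardA (cardfsD1 r A) rA.
move=> l l0 lv0; have [s1 s2] := sum_parent_coord l.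
have := indepA (parent_coord l); rewrite -s1 -s2 => /(_ l0 lv0) parent0.
have := parent0 r rA; have := parent0 w wA.
rewrite /parent_coord eqxx (eq_sym w r) (negbTE ne_rw) eqxx => lw0 lz0.
move=> v; rewrite !inE => /orP[/eqP-> | /andP[ne_vr vA]]; first lra.
have := parent0 v vA; rewrite /parent_coord (negbTE ne_vr).
by case: ifP => [/eqP-> | //]; lra.
Qed.

End Child.

Lemma common_barycentric Tr A B x : conforming Tr -> A \in Tr -> B \in Tr ->
  Defs.conv A x -> Defs.conv B x ->
  exists mu, [/\ barycentric (A `&` B)%fset mu x, barycentric A mu x, barycentric B mu x &
                 forall v, v \notin (A `&` B)%fset -> mu v = 0].
Proof.
move=> [_ conf] ATr BTr xA xB.
have /convP[m bm] : Defs.conv (A `&` B)%fset x by rewrite -(conf A B ATr BTr).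
have ext E : fsubset (A `&` B)%fset E ->
    barycentric E (fun v => if v \in (A `&` B)%fset then m v else 0) x.
  by move=> sE; apply: barycentric_restrict bm _ => v /(fsubsetP sE) ->.
exists (fun v => if v \in (A `&` B)%fset then m v else 0); split.
- exact/ext/fsubset_refl.
- exact/ext/fsubsetIl.
- exact/ext/fsubsetIr.
- by move=> v /negbTE ->.
Qed.

Lemma midpoint_notin Tr T B (r w : pt) : conforming Tr -> T \in Tr -> B \in Tr ->
  r \in T -> w \in T -> r != w -> 2^-1 *: (r + w) \notin B.
Proof.
move=> confTr TTr BTr rT wT ne_rw; apply/negP => zB.
have sub : fsubset [fset r; w]%fset T by apply/fsubsetP => v; rewrite !inE => /orP[]/eqP->.
have lam : barycentric T (fun v => if v \in [fset r; w]%fset then 2^-1 else 0) (2^-1 *: (r + w)).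
  by apply: barycentric_restrict (barycentric_midpoint ne_rw) _ => v /(fsubsetP sub) ->.
have zT : Defs.conv T (2^-1 *: (r + w)) by apply/convP; eexists; apply: lam.
have [mu [_ muT _ mu0]] := common_barycentric confTr TTr BTr zT (conv_vertex zB).
have eq_mu := barycentric_unique (confTr.1 T TTr).2 lam muT.
have inB v : v \in [fset r; w]%fset -> v \in B.
  move=> vrw; have vT := fsubsetP sub v vrw; apply: contraT => vNB.
  have := eq_mu v vT; rewrite vrw mu0 ?in_fsetI ?(negbTE vNB) ?andbF // => /eqP.
  by rewrite invr_eq0 pnatr_eq0.
apply: (midpoint_not_indep (inB r _) (inB w _) ne_rw zB (confTr.1 B BTr).2);
  by rewrite !inE eqxx ?orbT.
Qed.

Lemma conv_child_cap Tr A B (r w z : pt) x : conforming Tr -> A \in Tr -> B \in Tr ->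
  r \in A -> w \in A -> r != w -> z \notin A -> z = 2^-1 *: (r + w) ->
  (r \notin B) || (w \notin B) -> Defs.conv (z |` (A `\ r))%fset x -> Defs.conv B x ->
  Defs.conv ((z |` (A `\ r)) `&` B)%fset x.
Proof.
move=> confTr ATr BTr rA wA ne_rw zNA z_mid rwNB xC xB.
have xA := conv_parent rA wA ne_rw zNA z_mid xC.
have [mu [_ muA _ mu0]] := common_barycentric confTr ATr BTr xA xB.
have le_rw := conv_child_coord_le rA wA ne_rw zNA z_mid (confTr.1 A ATr).2 xC muA.
have mu0B v : v \notin B -> mu v = 0 by move=> vNB; rewrite mu0 // in_fsetI (negbTE vNB) andbF.
have mu_r : mu r = 0.
  case/orP: rwNB => [/mu0B // | /mu0B mu_w].
  by have [mu_ge0 _ _] := muA; have := mu_ge0 r rA; lra.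
apply: conv_support muA _ => v vA; rewrite in_fsetI negb_and => /orP[|/mu0B //].
by rewrite !inE vA andbT negb_or => /andP[_ /negPn/eqP->].
Qed.

Lemma fset2_other (a b r : pt) : a != b -> r \in [fset a; b]%fset ->
  exists w, [/\ r != w, [fset r; w]%fset = [fset a; b]%fset & r + w = a + b].
Proof.
move=> ne_ab; rewrite !inE => /orP[]/eqP->; first by exists b.
by exists a; rewrite eq_sym fsetUC addrC.
Qed.

Lemma conv_children_cap Tr A B (a b z r : pt) x : conforming Tr -> A \in Tr -> B \in Tr ->
  fsubset [fset a; b]%fset (A `&` B)%fset -> a != b -> z \notin A -> z \notin B ->
  z = 2^-1 *: (a + b) -> r \in [fset a; b]%fset ->
  Defs.conv (z |` (A `\ a))%fset x -> Defs.conv (z |` (B `\ r))%fset x ->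
  Defs.conv ((z |` (A `\ a)) `&` (z |` (B `\ r)))%fset x.
Proof.
move=> confTr ATr BTr abD ne_ab zNA zNB z_mid rab xCA xCB.
have aD : a \in (A `&` B)%fset by apply: (fsubsetP abD); rewrite !inE eqxx.
have bD : b \in (A `&` B)%fset by apply: (fsubsetP abD); rewrite !inE eqxx orbT.
have /fsetIP[aA aB] := aD; have /fsetIP[bA bB] := bD.
have zND : z \notin (A `&` B)%fset by rewrite in_fsetI negb_and zNA.
have [w [ne_rw rw_ab sum_rw]] := fset2_other ne_ab rab.
have zw : z = 2^-1 *: (r + w) by rewrite sum_rw.
have [rB wB] : r \in B /\ w \in B.
  by split; apply: (fsubsetP (fsubset_trans abD (fsubsetIr A B))); rewrite -rw_ab !inE eqxx ?orbT.
have xA := conv_parent aA bA ne_ab zNA z_mid xCA.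
have xB := conv_parent rB wB ne_rw zNB zw xCB.
have [mu [muD muA muB _]] := common_barycentric confTr ATr BTr xA xB.
have le_ab := conv_child_coord_le aA bA ne_ab zNA z_mid (confTr.1 A ATr).2 xCA muA.
have le_rw := conv_child_coord_le rB wB ne_rw zNB zw (confTr.1 B BTr).2 xCB muB.
have [l [bl lb]] := barycentric_child aD bD ne_ab zND z_mid muD le_ab.
apply: conv_support bl _ => v; rewrite !inE => /orP[/eqP-> | /andP[ne_va /andP[vA vB]]].
  by rewrite eqxx.
have ne_vz : v != z by apply: contraNneq zND => <-; rewrite in_fsetI vA vB.
rewrite (negbTE ne_vz) ne_va vA vB /= andbT negbK => /eqP eq_vr; subst v.
have eq_rb : r = b by move: rab; rewrite !inE (negbTE ne_va) => /eqP.
have eq_wa : w = a.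
  have : w \in [fset a; b]%fset by rewrite -rw_ab !inE eqxx orbT.
  by rewrite !inE -eq_rb (eq_sym w r) (negbTE ne_rw) orbF => /eqP.
by move: le_rw; rewrite eq_rb eq_wa lb; lra.
Qed.

Lemma conforming_bisect Tr Tr' (a b z : pt) : conforming Tr -> a != b ->
  z = 2^-1 *: (a + b) ->
  (forall T, T \in Tr' -> (T \in Tr /\ ~~ fsubset [fset a; b]%fset T) \/
     exists A r, [/\ A \in Tr, fsubset [fset a; b]%fset A, r \in [fset a; b]%fset &
                     T = (z |` (A `\ r))%fset]) ->
  conforming Tr'.
Proof.
move=> confTr ne_ab z_mid Tr'P; have [ns conf] := confTr.
have kind T : T \in Tr' -> (T \in Tr /\ ~~ fsubset [fset a; b]%fset T) \/
    exists A r w, [/\ A \in Tr, r \in A, w \in A, r != w & [/\ z \notin A,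
      z = 2^-1 *: (r + w), [fset r; w]%fset = [fset a; b]%fset & T = (z |` (A `\ r))%fset]].
  move=> /Tr'P[old | [A [r [ATr abA rab ->]]]]; [by left | right].
  have [w [ne_rw rw_ab sum_rw]] := fset2_other ne_ab rab.
  have /fsubsetP rwA : fsubset [fset r; w]%fset A by rewrite rw_ab.
  have [rA wA] : r \in A /\ w \in A by split; apply: rwA; rewrite !inE eqxx ?orbT.
  exists A, r, w; split=> //; split=> //; last by rewrite sum_rw.
  by rewrite z_mid -sum_rw; exact: (midpoint_notin confTr ATr ATr rA wA ne_rw).
have not_both_in r w T : ~~ fsubset [fset a; b]%fset T ->
    [fset r; w]%fset = [fset a; b]%fset -> (r \notin T) || (w \notin T).
  move=> abNT rw_ab; rewrite -negb_and; apply: contra abNT => /andP[rT wT].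
  rewrite -rw_ab.
  by apply/fsubsetP => v; rewrite !inE => /orP[]/eqP->.
split=> [T /kind[[/ns //] | [A [r [w [ATr rA wA ne_rw [zNA z_rw _ ->]]]]]] | T1 T2 T1' T2'].
  exact: nsimplex_child rA wA ne_rw zNA z_rw (ns A ATr).
apply/seteqP; split=> x; last first.
  by move=> xI; split; apply: conv_sub xI; [apply: fsubsetIl | apply: fsubsetIr].
case: (kind T1 T1') => [[T1Tr abNT1] | [A [r1 [w1 [ATr r1A w1A ne1 [zNA z1 rw1 ->]]]]]];
  case: (kind T2 T2') => [[T2Tr abNT2] | [B [r2 [w2 [BTr r2B w2B ne2 [zNB z2 rw2 ->]]]]]];
  case=> /= x1 x2.
- by rewrite -conf.
- rewrite fsetIC; apply: (conv_child_cap confTr BTr T1Tr r2B w2B ne2 zNB z2 _ x2 x1).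
  exact: not_both_in abNT1 rw2.
- apply: (conv_child_cap confTr ATr T2Tr r1A w1A ne1 zNA z1 _ x1 x2).
  exact: not_both_in abNT2 rw1.
- apply: conv_children_cap confTr ATr BTr _ ne1 zNA zNB z1 _ x1 x2.
    apply/fsubsetP => v vrw1; have vrw2 : v \in [fset r2; w2]%fset by rewrite rw2 -rw1.
    by rewrite in_fsetI; apply/andP; split; [move: vrw1 | move: vrw2];
      rewrite !inE => /orP[]/eqP->.
  by rewrite rw1 -rw2 !inE eqxx.
Qed.

End Barycentric.

Section Refinement.
Variables (R : realType) (n N : nat).
Hypotheses (N_gt0 : (0 < N)%N) (n_gt0 : (0 < n)%N).
Local Notation pt := 'rV[R]_n.
Implicit Types (Tr : {fset {fset pt}}) (g : pt -> int).

Definition mesh_vertex Tr (v : pt) : Prop := exists2 T, T \in Tr & v \in T.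

Definition keeps_vertices Tr g Tr' g' : Prop :=
  forall v, mesh_vertex Tr v -> mesh_vertex Tr' v /\ g' v = g v.

Definition proper_mesh Tr g : Prop :=
  conforming Tr /\ {in Tr, forall T, proper_gen N g T}.

Lemma nsimplex_card_ge2 (T : {fset pt}) : nsimplex T -> (2 <= #|`T|)%N.
Proof. by case=> -> _; rewrite ltnS. Qed.

Lemma in_omega Tr e T : (T \in omega Tr e) = (T \in Tr) && fsubset e T.
Proof. by rewrite /omega !inE. Qed.

Lemma mem_bisect_all Tr g T T1 :
  (forall T', T' \in omega Tr (bse N g T) -> bse N g T' = bse N g T) ->
  T1 \in bisect_all N Tr g T ->
  (T1 \in Tr /\ ~~ fsubset (bse N g T) T1) \/
  exists A r, [/\ A \in Tr, fsubset (bse N g T) A, r \in bse N g T &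
                  T1 = (bsv N g T |` (A `\ r))%fset].
Proof.
move=> same_bse; rewrite in_fsetU in_fsetD in_omega => /orP[/andP[+ T1Tr] | ].
  by rewrite T1Tr /= => ?; left.
move=> /bigfcupP[A /andP[AW _]]; have := same_bse A AW; move: AW; rewrite in_omega.
move=> /andP[ATr sA] eq_bse; rewrite /children /bsv eq_bse => /imfsetP[r /= rB ->].
by right; exists A, r.
Qed.

Lemma mesh_vertex_bisect_all Tr g T (a b v : pt) :
  (forall T', T' \in omega Tr (bse N g T) -> bse N g T' = bse N g T) ->
  bse N g T = [fset a; b]%fset -> a != b ->
  mesh_vertex Tr v -> mesh_vertex (bisect_all N Tr g T) v.
Proof.
move=> same_bse eB ne_ab [B BTr vB].
have [BW | BNW] := boolP (B \in omega Tr (bse N g T)); last first.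
  by exists B => //; rewrite in_fsetU in_fsetD BNW BTr.
pose x := if v == a then b else a.
have xB : x \in bse N g T by rewrite eB /x !inE; case: ifP; rewrite eqxx ?orbT.
have ne_vx : v != x by rewrite /x; case: (eqVneq v a) => [->|].
exists (bsv N g T |` (B `\ x))%fset; last by rewrite !inE ne_vx vB orbT.
rewrite in_fsetU; apply/orP; right; apply/bigfcupP; exists B; first by rewrite BW.
by rewrite /children /bsv (same_bse B BW); apply/imfsetP; exists x.
Qed.

Lemma bisect_spec Tr g T : proper_mesh Tr g -> T \in Tr ->
  (forall T', T' \in omega Tr (bse N g T) -> bse N g T' = bse N g T) ->
  [/\ proper_mesh (bisect_all N Tr g T) (new_gen N g T),
      keeps_vertices Tr g (bisect_all N Tr g T) (new_gen N g T) &
      {in Tr, forall T2, T2 \notin bisect_all N Tr g T -> gsharp N g T2 <= gsharp N g T}].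
Proof.
move=> [confTr properTr] TTr same_bse; have [ns _] := confTr.
have card_ge2 B : B \in Tr -> (2 <= #|`B|)%N by move/ns/nsimplex_card_ge2.
have [g_inj _] := properTr T TTr.
have [sB B2 gB] := bseP N g_inj (card_ge2 T TTr).
have [a [b [eB ne_ab _]]] := edge_sorted_by_gen B2 (sub_in2 (fsubsetP sB) g_inj).
have [aT bT] : a \in T /\ b \in T by split; apply: (fsubsetP sB); rewrite eB !inE eqxx ?orbT.
have z_mid : bsv N g T = 2^-1 *: (a + b).
  by rewrite /bsv eB big_fsetU1 ?inE // big_seq_fset1.
have zNTr B : B \in Tr -> bsv N g T \notin B.
  by move=> BTr; rewrite z_mid; apply: (midpoint_notin confTr TTr BTr aT bT ne_ab).
have g'_eq B : B \in Tr -> {in B, new_gen N g T =1 g}.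
  move=> BTr v vB; rewrite /new_gen; case: eqP => // eq_vz.
  by move: (zNTr B BTr); rewrite -eq_vz vB.
have gsharp_omega A : A \in omega Tr (bse N g T) -> gsharp N g A = gsharp N g T.
  move=> AW; have := same_bse A AW; move: AW; rewrite in_omega => /andP[ATr _] eq_bse.
  have [gA_inj _] := properTr A ATr.
  by have [_ _ <-] := bseP N gA_inj (card_ge2 A ATr); rewrite eq_bse gB.
split.
- split.
    apply: conforming_bisect confTr ne_ab z_mid _ => T1 /(mem_bisect_all same_bse).
    by rewrite eB.
  move=> T1 /(mem_bisect_all same_bse) [[T1Tr _] | [A [r [ATr sA rB ->]]]].
    apply: proper_gen_eq_in (card_ge2 T1 T1Tr) (properTr T1 T1Tr).
    by move=> v vT; rewrite (g'_eq T1 T1Tr).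
  have AW : A \in omega Tr (bse N g T) by rewrite in_omega ATr.
  apply: proper_gen_child (properTr A ATr) (card_ge2 A ATr) _ (zNTr A ATr) (g'_eq A ATr) _ => //.
  - by rewrite same_bse.
  - by rewrite /new_gen eqxx gsharp_omega.
- move=> v [B BTr vB]; split; last exact: g'_eq B BTr v vB.
  by apply: mesh_vertex_bisect_all same_bse eB ne_ab _; exists B.
- move=> B BTr; rewrite in_fsetU in_fsetD BTr andbT negb_or negbK => /andP[BW _].
  by rewrite gsharp_omega.
Qed.

Lemma gsharp_keeps Tr g Tr' g' T : keeps_vertices Tr g Tr' g' ->
  proper_mesh Tr g -> T \in Tr -> gsharp N g' T = gsharp N g T.
Proof.
move=> keep [confTr properTr] TTr; have [g_inj _] := properTr T TTr.
have eq_g : {in T, g =1 g'} by move=> v vT; have [_ ->] := keep v (ex_intro2 _ _ T TTr vT).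
by rewrite (gsharp_eq_in N eq_g g_inj) // nsimplex_card_ge2 //; apply: confTr.1.
Qed.

Lemma refine_spec Tr g T Tr' g' : refine N Tr g T Tr' g' -> proper_mesh Tr g -> T \in Tr ->
  [/\ proper_mesh Tr' g', keeps_vertices Tr g Tr' g' &
      {in Tr, forall T2, T2 \notin Tr' -> gsharp N g T2 <= gsharp N g T}].
Proof.
elim=> {Tr g T Tr' g'} [Tr g T same_bse | Tr g T T' Tr1 g1 Tr2 g2 T'W ne_bse _ IH1 _ IH2] pm TTr.
  exact: bisect_spec.
have /andP[T'Tr sBT'] : (T' \in Tr) && fsubset (bse N g T) T' by rewrite -in_omega.
have [pm1 keep1 rem1] := IH1 pm T'Tr.
have lt_T'T : gsharp N g T' < gsharp N g T.
  have [confTr properTr] := pm; have [gT_inj _] := properTr T TTr.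
  have [gT'_inj _] := properTr T' T'Tr.
  have [_ B2 <-] := bseP N gT_inj (nsimplex_card_ge2 (confTr.1 T TTr)).
  by apply: gsharp_lt_edge (nsimplex_card_ge2 (confTr.1 T' T'Tr)) sBT' B2 _; rewrite // eq_sym.
have TTr1 : T \in Tr1.
  by apply: contraT => /(rem1 T TTr); rewrite leNgt lt_T'T.
have [pm2 keep2 rem2] := IH2 pm1 TTr1.
split=> // [v /keep1[/keep2[vTr2 ->] ->] // | T2 T2Tr T2NTr2].
have [T2Tr1 | T2NTr1] := boolP (T2 \in Tr1).
  by have := rem2 T2 T2Tr1 T2NTr2; rewrite !(gsharp_keeps keep1 pm).
exact: le_trans (rem1 T2 T2Tr T2NTr1) (ltW lt_T'T).
Qed.

Lemma proper_mesh_reachable Tr0 g0 Tr g : reachable N Tr0 g0 Tr g ->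
  proper_mesh Tr0 g0 -> proper_mesh Tr g.
Proof.
elim=> // Tr1 g1 T Tr' g' _ IH TTr1 ref pm0.
by have [] := refine_spec ref (IH pm0) TTr1.
Qed.

Lemma proper_mesh_init Tr0 (c : pt -> 'I_N.+1) : conforming Tr0 -> coloring Tr0 c ->
  proper_mesh Tr0 (init_gen c).
Proof.
move=> confTr col; split=> // T TTr; set g := init_gen c.
have g_le0 v : g v <= 0 by rewrite /g /init_gen oppr_le0.
have g_geN v : - N%:Z <= g v by rewrite /g /init_gen lerN2 lez_nat -ltnS ltn_ord.
have g_inj : {in T &, injective g}.
  move=> x y xT yT /eqP; rewrite /g /init_gen eqr_opp => /eqP [] eq_c.
  by apply: (col T TTr) => //; apply: val_inj.
split=> // v vT.
have [sB B2 <-] := bseP N g_inj (nsimplex_card_ge2 (confTr.1 T TTr)).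
have [x [y [-> ne_xy lt_yx]]] := edge_sorted_by_gen B2 (sub_in2 (fsubsetP sB) g_inj).
rewrite /gsharp bse_data_edge //=.
exact: le_lt_trans (g_le0 v) (edge_gsharp_gt0 N_gt0 (g_geN y) lt_yx).
Qed.

End Refinement.

Theorem lemma3p8 (R : realType) (n N : nat) (Tr0 : {fset {fset 'rV[R]_n}})
  (c : 'rV[R]_n -> 'I_N.+1) :
  (2 <= n)%N -> (n <= N)%N ->
  triangulation_of_domain Tr0 -> coloring Tr0 c ->
  forall (Tr : {fset {fset 'rV[R]_n}}) (g : 'rV[R]_n -> int),
    reachable N Tr0 (init_gen c) Tr g ->
    forall T, T \in Tr ->
      (forall e, fsubset e T -> #|` e| = 2%N -> e != bse N g T ->
         gsharp N g e > gsharp N g (bse N g T)) /\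
      (forall S, fsubset S T -> (2 <= #|` S|)%N ->
       forall e, fsubset e S -> #|` e| = 2%N -> e != bse N g S ->
         gsharp N g e > gsharp N g (bse N g S)).
Proof.
move=> n_ge2 le_nN [confTr0 _] col Tr g reach T TTr.
have n_gt0 : (0 < n)%N by apply: leq_trans n_ge2.
have N_gt0 : (0 < N)%N by apply: leq_trans le_nN.
have [confTr properTr] :=
  proper_mesh_reachable N_gt0 n_gt0 reach (proper_mesh_init N_gt0 n_gt0 confTr0 col).
have [g_inj _] := properTr T TTr.
have faces S : fsubset S T -> (2 <= #|` S|)%N ->
    forall e, fsubset e S -> #|` e| = 2%N -> e != bse N g S ->
    gsharp N g e > gsharp N g (bse N g S).
  move=> sST S2 e eS e2 ne_e; have S_inj := sub_in2 (fsubsetP sST) g_inj.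
  by have [_ _ ->] := bseP N S_inj S2; apply: gsharp_lt_edge.
split=> //; exact: faces T (fsubset_refl T) (nsimplex_card_ge2 n_gt0 (confTr.1 T TTr)).
Qed.
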